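(* Let $\mathcal{G}$ be a tomographically local GPT and let $\widetilde{\xi}:\mathcal{G}\to\mathbf{SubStoch}$ be an ontological model of $\mathcal{G}$, with $\widetilde\xi(A)=\mathbb{R}^{\Lambda_A}$. Then for each system $A$ there is an invertible linear map $\chi_A:A\to\mathbb{R}^{\Lambda_A}$ such that: (i) for every process $T:A\to B$ of $\mathcal{G}$, $\widetilde{\xi}(T)=\chi_B\circ T\circ\chi_A^{-1}$; (ii) $\mathbf{1}_{\Lambda_A}\circ\chi_A=u_A$, where $\mathbf{1}_{\Lambda_A}$ is the all-ones covector on $\mathbb{R}^{\Lambda_A}$; (iii) for every pair of systems $A,B$, the linear map $X\mapsto\chi_B\circ X\circ\chi_A^{-1}$ (from linear maps $A\to B$ to linear maps $\mathbb{R}^{\Lambda_A}\to\mathbb{R}^{\Lambda_B}$) is positive: it maps the cone of nonnegative linear combinations of processes $A\to B$ of $\mathcal{G}$ into the cone of nonnegative linear combinations of substochastic maps $\mathbb{R}^{\Lambda_A}\to\mathbb{R}^{\Lambda_B}$.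
   Context: A process theory consists of systems (closed under a composition $A\otimes B$, with a trivial system $I$) and processes $T:A\to B$, closed under sequential composition $\circ$ and parallel composition $\otimes$ and containing identities; processes $I\to A$ are states, $A\to I$ effects, $I\to I$ scalars. $\mathbf{RLinear}$ is the process theory of finite-dimensional real vector spaces (composite $=$ tensor product, trivial system $\mathbb{R}$) and linear maps. $\mathbf{SubStoch}$ is the sub-process theory of $\mathbf{RLinear}$ whose systems are spaces $\mathbb{R}^\Lambda$ of real functions on finite sets $\Lambda$ (with $\mathbb{R}^{\Lambda}\otimes\mathbb{R}^{\Lambda'}=\mathbb{R}^{\Lambda\times\Lambda'}$, trivial system $\mathbb{R}$), and whose processes $\mathbb{R}^\Lambda\to\mathbb{R}^{\Lambda'}$ are the substochastic maps, i.e. linear maps $v\mapsto(\lambda'\mapsto\sum_\lambda f(\lambda'|\lambda)v(\lambda))$ with $f(\lambda'|\lambda)\in[0,1]$ and $\sum_{\lambda'}f(\lambda'|\lambda)\le1$ for all $\lambda$. The all-ones covector $\mathbf{1}_\Lambda$ is $v\mapsto\sum_\lambda v(\lambda)$. A tomographically local GPT is here a sub-process theory $\mathcal{G}$ of $\mathbf{RLinear}$ (closed under $\circ$, $\otimes$, containing identities) such that: each system $A$ is a finite-dimensional real vector space and composites are tensor products; the states of $A$ span $A$ and the effects on $A$ span $A^*$; every scalar lies in $[0,1]$; for each type the set of processes is closed under convex combinations; each system $A$ has a distinguished deterministic effect $u_A$ with $u_{A\otimes B}=u_A\otimes u_B$. An ontological model of $\mathcal{G}$ is a map $\widetilde\xi:\mathcal{G}\to\mathbf{SubStoch}$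 that is diagram-preserving (it assigns to each system $A$ a space $\mathbb{R}^{\Lambda_A}$, with $\widetilde\xi(A\otimes B)=\mathbb{R}^{\Lambda_A}\otimes\mathbb{R}^{\Lambda_B}$, $\widetilde\xi(I)=\mathbb{R}$, and to each process $T:A\to B$ a substochastic map $\widetilde\xi(T):\mathbb{R}^{\Lambda_A}\to\mathbb{R}^{\Lambda_B}$, preserving $\circ$, $\otimes$ and identities) and satisfies: (1) $\widetilde\xi(u_A)=\mathbf{1}_{\Lambda_A}$; (2) $\widetilde\xi(s)=s$ for every scalar $s$; (3) it preserves convex combinations of processes of the same type and coarse-grainings (sums) of effects whenever these relations hold in $\mathcal{G}$. *)

From HB Require Import structures.
From mathcomp Require Import all_boot all_order all_algebra.
From mathcomp Require Import mxtens reals.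
Set Implicit Arguments. Unset Strict Implicit. Unset Printing Implicit Defensive.
Import Order.TTheory GRing.Theory Num.Theory.
Local Open Scope ring_scope.

(* A finite-dimensional real vector space is R^n
   (column vectors 'cV_n); a linear map R^n -> R^m is a matrix 'M_(m, n)
   acting on column vectors, sequential composition S o T is [S *m T], and
   the tensor product of spaces/maps is the Kronecker product [tensmx]
   (R^n (x) R^m = R^(n*m), with the standard index pairing).
   In SubStoch, R^Lambda for a finite set Lambda with |Lambda| = n is R^n,
   and a substochastic map R^Lambda -> R^Lambda' is the matrix
   (f(l'|l))_{l',l}. *)

Section Defs.
Variable R : realType.

(** Systems of a process theory (a sub-process theory of RLinear):
    abstract system labels, each carrying its underlying space R^(sdim A);
    the composite A (x) B carries R^(sdim A) (x) R^(sdim B) = R^(sdim A * sdim B),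
    the trivial system carries R. *)
Record sysdata := SysData {
  sys :> Type;
  sdim : sys -> nat;
  tens : sys -> sys -> sys;
  triv : sys;
  sdim_tens : forall A B, sdim (tens A B) = (sdim A * sdim B)%N;
  sdim_triv : sdim triv = 1%N
}.

Variable S : sysdata.

Definition pmat (A B : S) := 'M[R]_(sdim B, sdim A).

Definition ptens (A A' B B' : S) (T : pmat A B) (T' : pmat A' B') :
    pmat (tens A A') (tens B B') :=
  castmx (esym (sdim_tens B B'), esym (sdim_tens A A')) (tensmx T T').

Lemma sdim_triv_triv : sdim (tens (triv S) (triv S)) = sdim (triv S).
Proof. by rewrite sdim_tens sdim_triv. Qed.

Definition lincomb m n k (c : 'I_k -> R) (X : 'I_k -> 'M[R]_(m, n)) :=
  \sum_(i < k) c i *: X i.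

(** Tomographically local GPT: [P A B T] says T is a process A -> B,
    [u A] is the distinguished deterministic effect of A. *)
Definition is_TL_GPT (P : forall A B : S, pmat A B -> Prop)
    (u : forall A : S, pmat A (triv S)) : Prop :=
  (forall A : S, P A A 1%:M) /\
  (forall (A B C : S) (T : pmat A B) (T' : pmat B C),
      P A B T -> P B C T' -> P A C (T' *m T)) /\
  (forall (A A' B B' : S) (T : pmat A B) (T' : pmat A' B'),
      P A B T -> P A' B' T' -> P (tens A A') (tens B B') (ptens T T')) /\
  (forall (A : S) (v : 'cV[R]_(sdim A)), exists k (c : 'I_k -> R)
      (s : 'I_k -> pmat (triv S) A),
      (forall i, P (triv S) A (s i)) /\
      v = lincomb c (fun i => castmx (erefl, sdim_triv S) (s i))) /\
  (forall (A : S) (w : 'rV[R]_(sdim A)), exists k (c : 'I_k -> R)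
      (e : 'I_k -> pmat A (triv S)),
      (forall i, P A (triv S) (e i)) /\
      w = lincomb c (fun i => castmx (sdim_triv S, erefl) (e i))) /\
  (forall s : pmat (triv S) (triv S), P (triv S) (triv S) s ->
      forall i j, 0 <= s i j <= 1) /\
  (forall (A B : S) (T1 T2 : pmat A B) (p : R), 0 <= p <= 1 ->
      P A B T1 -> P A B T2 -> P A B (p *: T1 + (1 - p) *: T2)) /\
  (forall A : S, P A (triv S) (u A)) /\
  (forall A B : S,
      u (tens A B) = castmx (sdim_triv_triv, erefl) (ptens (u A) (u B))).

Definition substoch m n (M : 'M[R]_(m, n)) : Prop :=
  (forall i j, 0 <= M i j <= 1) /\ (forall j, \sum_i M i j <= 1).

(** Data of a diagram-preserving map G -> SubStoch: each system A is sent to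
    R^(lam A) (i.e. R^Lambda_A with |Lambda_A| = lam A), composites to
    tensor products, the trivial system to R, and each linear map A -> B to
    a linear map R^(lam A) -> R^(lam B) (only its values on processes of G
    matter). *)
Record ontdata := OntData {
  lam : S -> nat;
  lam_tens : forall A B, lam (tens A B) = (lam A * lam B)%N;
  lam_triv : lam (triv S) = 1%N;
  xi : forall A B : S, pmat A B -> 'M[R]_(lam B, lam A)
}.

Definition otens (M : ontdata) (A A' B B' : S)
    (X : 'M[R]_(lam M B, lam M A)) (Y : 'M[R]_(lam M B', lam M A')) :
    'M[R]_(lam M (tens B B'), lam M (tens A A')) :=
  castmx (esym (lam_tens M B B'), esym (lam_tens M A A')) (tensmx X Y).

Definition is_ontological_model (P : forall A B : S, pmat A B -> Prop)
    (u : forall A : S, pmat A (triv S)) (M : ontdata) : Prop :=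
  (forall (A B : S) (T : pmat A B), P A B T -> substoch (xi M T)) /\
  (forall A : S, xi M (1%:M : pmat A A) = 1%:M) /\
  (forall (A B C : S) (T : pmat A B) (T' : pmat B C),
      P A B T -> P B C T' -> xi M (T' *m T) = xi M T' *m xi M T) /\
  (forall (A A' B B' : S) (T : pmat A B) (T' : pmat A' B'),
      P A B T -> P A' B' T' ->
      xi M (ptens T T') = otens (xi M T) (xi M T')) /\
  (forall A : S,
      xi M (u A) = castmx (esym (lam_triv M), erefl) (const_mx 1 : 'M[R]_(1, lam M A))) /\
  (forall s : pmat (triv S) (triv S), P (triv S) (triv S) s ->
      xi M s = castmx (esym (lam_triv M), esym (lam_triv M))
                 (castmx (sdim_triv S, sdim_triv S) s)) /\
  (forall (A B : S) k (p : 'I_k -> R) (T : 'I_k -> pmat A B) (T0 : pmat A B),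
      (forall i, 0 <= p i) -> \sum_(i < k) p i = 1 ->
      (forall i, P A B (T i)) -> P A B T0 -> T0 = lincomb p T ->
      xi M T0 = lincomb p (fun i => xi M (T i))) /\
  (forall (A : S) k (e : 'I_k -> pmat A (triv S)) (e0 : pmat A (triv S)),
      (forall i, P A (triv S) (e i)) -> P A (triv S) e0 ->
      e0 = \sum_(i < k) e i ->
      xi M e0 = \sum_(i < k) xi M (e i)).

Definition cone m n (Q : 'M[R]_(m, n) -> Prop) (X : 'M[R]_(m, n)) : Prop :=
  exists k (c : 'I_k -> R) (Y : 'I_k -> 'M[R]_(m, n)),
    (forall i, 0 <= c i) /\ (forall i, Q (Y i)) /\ X = lincomb c Y.

End Defs.

(* The identity of a tomographically local system is a prepare-and-measure combination
   [1 = \sum_m c_m s_m e_m] of states and effects.  An ontological model preserves every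
   linear relation between processes: convex ones by assumption, conic ones after
   normalising, and arbitrary ones after moving the negative terms across and balancing
   the total weights with [s_B t u_A = t (s_B u_A)] for a scalar process [t <> 1] (if
   every scalar process is 1, the weights balance by themselves).  Hence
   [1 = \sum_m c_m xi(s_m) xi(e_m)] as well, so [chi = \sum_m c_m xi(s_m) e_m] and
   [\sum_m c_m s_m xi(e_m)] are mutually inverse, and inserting both decompositions of the
   identity gives [xi(T) = chi_B T chi_A^-1]. *)

From HB Require Import structures.
From mathcomp Require Import all_boot all_order all_algebra.
From mathcomp Require Import mxtens reals.
From mathcomp Require Import ring.
From Stdlib Require Import Classical_Prop ClassicalEpsilon.
Import Order.TTheory GRing.Theory Num.Theory.
Local Open Scope ring_scope.

Section CastMatrices.
Context {R : pzRingType}.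

Lemma castmx_scalar_mx m n (e : m = n) (a : R) : castmx (e, e) (a%:M : 'M_m) = a%:M.
Proof. by case: n / e; rewrite castmx_id. Qed.

Lemma castmx_mull m m' n k (e : m = m') (A : 'M[R]_(m, k)) (B : 'M[R]_(k, n)) :
  castmx (e, erefl k) A *m B = castmx (e, erefl n) (A *m B).
Proof. by case: m' / e; rewrite !castmx_id. Qed.

Lemma mulmx_castmx_inner m n k k' (e : k = k') (A : 'M[R]_(m, k)) (B : 'M[R]_(k, n)) :
  castmx (erefl m, e) A *m castmx (e, erefl n) B = A *m B.
Proof. by case: k' / e; rewrite !castmx_id. Qed.

Lemma castmx_mul_castmx1 m n (e : m = n) :
  castmx (e, erefl m) 1%:M *m castmx (erefl m, e) 1%:M = 1%:M :> 'M[R]_n.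
Proof. by case: n / e; rewrite !castmx_id mulmx1. Qed.

Lemma dim1_scalar_mx {m} (e : m = 1%N) (A : 'M[R]_m) : exists a, A = a%:M.
Proof. by subst m; exists (A 0 0); exact: mx11_scalar. Qed.

Lemma dim0_mx_eq m n (A B : 'M[R]_(m, n)) : m = 0%N \/ n = 0%N -> A = B.
Proof. by case=> e; subst; [rewrite [A]flatmx0 [B]flatmx0 | rewrite [A]thinmx0 [B]thinmx0]. Qed.

End CastMatrices.

Lemma subr_eq_subr (V : zmodType) (a b c d : V) : a - b = c - d <-> a + d = c + b.
Proof.
split=> h; first by rewrite -[a](subrK b) h addrAC subrK.
by rewrite -[a](addrK d) h addrAC addrK.
Qed.

Section Combinations.
Context {R : realFieldType} {V : lmodType R}.

Definition pos_part {T : Type} (s : seq (R * T)) := [seq x <- s | 0 <= x.1].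
Definition neg_part {T : Type} (s : seq (R * T)) := [seq (- x.1, x.2) | x <- s & x.1 < 0].

Lemma sum_pos_neg {T : Type} (F : T -> V) (s : seq (R * T)) :
  \sum_(x <- s) x.1 *: F x.2 =
  \sum_(x <- pos_part s) x.1 *: F x.2 - \sum_(x <- neg_part s) x.1 *: F x.2.
Proof.
rewrite /pos_part /neg_part big_map !big_filter (bigID (fun x => 0 <= x.1)) /=.
congr (_ + _); rewrite -sumrN; apply: eq_big => [x|x _]; first by rewrite ltNge.
by rewrite scaleNr opprK.
Qed.

Lemma sum_pos_neg_cat {T : Type} (F : T -> V) (s t : seq (R * T)) :
  \sum_(x <- s) x.1 *: F x.2 = \sum_(x <- t) x.1 *: F x.2 <->
  \sum_(x <- pos_part s ++ neg_part t) x.1 *: F x.2 =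
  \sum_(x <- pos_part t ++ neg_part s) x.1 *: F x.2.
Proof. by rewrite !big_cat (sum_pos_neg F s) (sum_pos_neg F t) subr_eq_subr. Qed.

Lemma pos_neg_cat_ge0 {T : eqType} (Q : T -> Prop) (s t : seq (R * T)) :
  {in s, forall x, Q x.2} -> {in t, forall x, Q x.2} ->
  {in pos_part s ++ neg_part t, forall x, 0 <= x.1 /\ Q x.2}.
Proof.
move=> Qs Qt x; rewrite mem_cat mem_filter => /orP[/andP[x0 /Qs]//|/mapP[y]].
by rewrite mem_filter => /andP[y0 /Qt Qy] ->; rewrite oppr_ge0 ltW.
Qed.

Lemma sum_coef_eq0 {T : eqType} (F : T -> V) (s : seq (R * T)) :
  {in s, forall x, 0 <= x.1} -> \sum_(x <- s) x.1 = 0 -> \sum_(x <- s) x.1 *: F x.2 = 0.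
Proof.
move=> s0 /eqP; rewrite big_seq psumr_eq0 => [/allP s_eq0|x /s0//].
rewrite big_seq big1 // => x xs.
by move/implyP: (s_eq0 x xs) => /(_ xs) /eqP ->; rewrite scale0r.
Qed.

Lemma convex_closed_sum {Q : V -> Prop} {s : seq (R * V)} :
    (forall x y (p : R), 0 <= p <= 1 -> Q x -> Q y -> Q (p *: x + (1 - p) *: y)) ->
    {in s, forall x, 0 <= x.1 /\ Q x.2} -> 0 < \sum_(x <- s) x.1 ->
  Q ((\sum_(x <- s) x.1)^-1 *: \sum_(x <- s) x.1 *: x.2).
Proof.
move=> Qconv; elim: s => [|[p v] s IH] Hs; first by rewrite big_nil ltxx.
have [p0 Qv] : 0 <= p /\ Q v by apply: (Hs (p, v)); rewrite mem_head.
have {}Hs : {in s, forall x, 0 <= x.1 /\ Q x.2}.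
  by move=> x xs; apply: Hs; rewrite inE xs orbT.
rewrite !big_cons /=; set W := \sum_(x <- s) x.1 => pW0.
have W0 : 0 <= W by rewrite /W big_seq sumr_ge0 // => x /Hs [].
move: W0; rewrite le0r => /orP[/eqP W_eq0 | W_gt0].
  rewrite (sum_coef_eq0 (fun x => x)) ?W_eq0 => [|x /Hs[]//|//].
  by move: pW0; rewrite W_eq0 !addr0 => p_gt0; rewrite scalerA mulVf ?scale1r ?gt_eqF.
have pW_neq0 : p + W != 0 by rewrite gt_eqF.
have -> : (p + W)^-1 *: (p *: v + \sum_(x <- s) x.1 *: x.2) =
          (p / (p + W)) *: v + (1 - p / (p + W)) *: (W^-1 *: \sum_(x <- s) x.1 *: x.2).
  rewrite scalerDr !scalerA; congr (_ *: _ + _ *: _); first by rewrite mulrC.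
  by field; rewrite pW_neq0 gt_eqF.
apply: Qconv (IH Hs W_gt0) => //.
by rewrite divr_ge0 ?(ltW pW0) //= ler_pdivrMr // mul1r lerDl ltW.
Qed.

End Combinations.

Section OntologicalModel.
Context {R : realType} {S : sysdata}.
Variables (P : forall A B : S, pmat R A B -> Prop) (u : forall A : S, pmat R A (triv S)).
Variable M : ontdata R S.

Hypothesis P_id : forall A : S, P A A 1%:M.
Hypothesis P_comp : forall {A B C : S} {T : pmat R A B} {T' : pmat R B C},
  P A B T -> P B C T' -> P A C (T' *m T).
Hypothesis states_span : forall (A : S) (v : 'cV[R]_(sdim A)),
  exists k (c : 'I_k -> R) (s : 'I_k -> pmat R (triv S) A),
  (forall i, P (triv S) A (s i)) /\
  v = lincomb c (fun i => castmx (erefl, sdim_triv S) (s i)).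
Hypothesis effects_span : forall (A : S) (w : 'rV[R]_(sdim A)),
  exists k (c : 'I_k -> R) (e : 'I_k -> pmat R A (triv S)),
  (forall i, P A (triv S) (e i)) /\
  w = lincomb c (fun i => castmx (sdim_triv S, erefl) (e i)).
Hypothesis scalar_range : forall {s : pmat R (triv S) (triv S)},
  P (triv S) (triv S) s -> forall i j, 0 <= s i j <= 1.
Hypothesis P_convex : forall (A B : S) (T1 T2 : pmat R A B) (p : R), 0 <= p <= 1 ->
  P A B T1 -> P A B T2 -> P A B (p *: T1 + (1 - p) *: T2).
Hypothesis P_u : forall A : S, P A (triv S) (u A).

Hypothesis xi_substoch : forall (A B : S) (T : pmat R A B), P A B T -> substoch (xi M T).
Hypothesis xi1 : forall A : S, xi M (1%:M : pmat R A A) = 1%:M.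
Hypothesis xiM : forall {A B C : S} {T : pmat R A B} {T' : pmat R B C},
  P A B T -> P B C T' -> xi M (T' *m T) = xi M T' *m xi M T.
Hypothesis xi_u : forall A : S,
  xi M (u A) = castmx (esym (lam_triv M), erefl) (const_mx 1 : 'M[R]_(1, lam M A)).
Hypothesis xi_scalar : forall s : pmat R (triv S) (triv S), P (triv S) (triv S) s ->
  xi M s = castmx (esym (lam_triv M), esym (lam_triv M))
             (castmx (sdim_triv S, sdim_triv S) s).
Hypothesis xi_convex_comb : forall (A B : S) k (p : 'I_k -> R) (T : 'I_k -> pmat R A B)
    (T0 : pmat R A B),
  (forall i, 0 <= p i) -> \sum_(i < k) p i = 1 ->
  (forall i, P A B (T i)) -> P A B T0 -> T0 = lincomb p T ->
  xi M T0 = lincomb p (fun i => xi M (T i)).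
Hypothesis xi_coarse_grain : forall (A : S) k (e : 'I_k -> pmat R A (triv S))
    (e0 : pmat R A (triv S)),
  (forall i, P A (triv S) (e i)) -> P A (triv S) e0 -> e0 = \sum_(i < k) e i ->
  xi M e0 = \sum_(i < k) xi M (e i).

Lemma sdim_lam_triv : sdim (triv S) = lam M (triv S).
Proof. by rewrite sdim_triv lam_triv. Qed.

(* Both [sdim (triv S)] and [lam M (triv S)] are 1; these casts of the identity
   identify scalars of the theory with scalars of the model. *)
Definition ont_in : 'M[R]_(lam M (triv S), sdim (triv S)) :=
  castmx (sdim_lam_triv, erefl) 1%:M.
Definition ont_out : 'M[R]_(sdim (triv S), lam M (triv S)) :=
  castmx (erefl, sdim_lam_triv) 1%:M.

Lemma ont_in_out : ont_in *m ont_out = 1%:M.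
Proof. exact: castmx_mul_castmx1. Qed.

Lemma ont_out_in : ont_out *m ont_in = 1%:M.
Proof. by rewrite mulmx_castmx_inner mulmx1. Qed.

Let triv0 : 'I_(sdim (triv S)) := cast_ord (esym (sdim_triv S)) ord0.

Lemma xi_scalar_mx {t : pmat R (triv S) (triv S)} {a : R} :
  P _ _ t -> t = a%:M -> xi M t = a%:M.
Proof. by move=> Pt tE; rewrite xi_scalar // tE !castmx_scalar_mx. Qed.

Lemma xi_triv {t : pmat R (triv S) (triv S)} :
  P _ _ t -> xi M t = ont_in *m t *m ont_out.
Proof.
move=> Pt; have [a tE] := dim1_scalar_mx (sdim_triv S) t.
by rewrite (xi_scalar_mx Pt tE) tE mul_mx_scalar -scalemxAl ont_in_out scalemx1.
Qed.

Lemma lam_eq0 (A : S) : sdim A = 0%N -> lam M A = 0%N.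
Proof.
move=> dA; apply/eqP; apply: contraT; rewrite -lt0n => lA.
have u0 : u A = \sum_(i < 0) u A by rewrite big_ord0; apply: dim0_mx_eq; right.
move: (xi_coarse_grain _ _ _ _ (fun=> P_u A) (P_u A) u0); rewrite big_ord0 xi_u.
move/matrixP => /(_ (cast_ord (esym (lam_triv M)) ord0) (Ordinal lA)).
by rewrite castmxE !mxE => /eqP; rewrite oner_eq0.
Qed.

Lemma exists_state (A : S) : (0 < sdim A)%N -> exists s, P (triv S) A s.
Proof.
move=> dA; have [[|k] [c [s [Ps vE]]]] := states_span A (const_mx 1); last by exists (s ord0).
move/matrixP: vE => /(_ (Ordinal dA) ord0).
by rewrite /lincomb big_ord0 !mxE => /eqP; rewrite oner_eq0.
Qed.

Lemma xi_normalized A B (s : seq (R * pmat R A B)) :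
    {in s, forall x, 0 <= x.1 /\ P A B x.2} -> 0 < \sum_(x <- s) x.1 ->
  xi M ((\sum_(x <- s) x.1)^-1 *: \sum_(x <- s) x.1 *: x.2)
  = (\sum_(x <- s) x.1)^-1 *: \sum_(x <- s) x.1 *: xi M x.2.
Proof.
move=> Hs W_gt0; have PT0 := convex_closed_sum (P_convex A B) Hs W_gt0.
move: W_gt0 PT0; rewrite !(big_tnth _ _ s); set r_ := tnth _.
set W := \sum_(i < size s) (r_ i).1 => W_gt0 PT0.
have Hr i : 0 <= (r_ i).1 /\ P A B (r_ i).2 by apply: Hs; exact: mem_tnth.
have lin m n (F : pmat R A B -> 'M[R]_(m, n)) :
    W^-1 *: \sum_i (r_ i).1 *: F (r_ i).2 =
    lincomb (fun i => (r_ i).1 / W) (fun i => F (r_ i).2).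
  by rewrite /lincomb scaler_sumr; apply: eq_bigr => i _; rewrite scalerA mulrC.
rewrite (lin _ _ (fun X => X)) (lin _ _ (@xi _ _ M A B)) in PT0 *.
apply: xi_convex_comb => // [i||i]; first by rewrite divr_ge0 ?(ltW W_gt0) ?(proj1 (Hr i)).
- by rewrite -mulr_suml divff ?gt_eqF.
- by case: (Hr i).
Qed.

Lemma xi_conic_balanced A B (s t : seq (R * pmat R A B)) :
    {in s, forall x, 0 <= x.1 /\ P A B x.2} -> {in t, forall x, 0 <= x.1 /\ P A B x.2} ->
    \sum_(x <- s) x.1 = \sum_(x <- t) x.1 ->
    \sum_(x <- s) x.1 *: x.2 = \sum_(x <- t) x.1 *: x.2 ->
  \sum_(x <- s) x.1 *: xi M x.2 = \sum_(x <- t) x.1 *: xi M x.2.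
Proof.
move=> Hs Ht eqW eqX.
have W0 : 0 <= \sum_(x <- s) x.1 by rewrite big_seq sumr_ge0 // => x /Hs[].
move: W0; rewrite le0r => /orP[/eqP W_eq0 | W_gt0].
  by rewrite !(sum_coef_eq0 (@xi _ _ M A B)) -?eqW // => x; [case/Ht | case/Hs].
have Winv_neq0 : (\sum_(x <- s) x.1)^-1 != 0 by rewrite invr_eq0 lt0r_neq0.
apply: (scalerI Winv_neq0).
have Wt_gt0 : 0 < \sum_(x <- t) x.1 by rewrite -eqW.
by rewrite -xi_normalized // eqW eqX xi_normalized.
Qed.

Lemma coef_sum_eq_of_trivial_scalars A B (s t : seq (R * pmat R A B)) :
    (forall a : pmat R (triv S) (triv S), P _ _ a -> a = 1%:M) -> (0 < sdim A)%N ->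
    {in s, forall x, P A B x.2} -> {in t, forall x, P A B x.2} ->
    \sum_(x <- s) x.1 *: x.2 = \sum_(x <- t) x.1 *: x.2 ->
  \sum_(x <- s) x.1 = \sum_(x <- t) x.1.
Proof.
move=> triv1 dA Hs Ht eqX; have [sA PsA] := exists_state A dA.
have sandwich r : {in r, forall x, P A B x.2} ->
    u B *m (\sum_(x <- r) x.1 *: x.2) *m sA = (\sum_(x <- r) x.1)%:M.
  move=> Hr; rewrite mulmx_sumr mulmx_suml -scalemx1 scaler_suml !big_seq.
  apply: eq_bigr => x /Hr Px.
  have Px' := P_comp PsA (P_comp Px (P_u B)).
  by rewrite -(triv1 _ Px') scalemxAl scalemxAr.
move: (congr1 (fun X => u B *m X *m sA) eqX); rewrite /= !sandwich //.
by move/matrixP/(_ triv0 triv0); rewrite !mxE eqxx !mulr1n.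
Qed.

Lemma xi_conic_rebalanced A B (a : pmat R (triv S) (triv S)) c (s t : seq (R * pmat R A B)) :
    P _ _ a -> a = c%:M -> 0 <= c < 1 -> (0 < sdim B)%N ->
    {in s, forall x, 0 <= x.1 /\ P A B x.2} -> {in t, forall x, 0 <= x.1 /\ P A B x.2} ->
    \sum_(x <- s) x.1 <= \sum_(x <- t) x.1 ->
    \sum_(x <- s) x.1 *: x.2 = \sum_(x <- t) x.1 *: x.2 ->
  \sum_(x <- s) x.1 *: xi M x.2 = \sum_(x <- t) x.1 *: xi M x.2.
Proof.
move=> Pa aE /andP[c_ge0 c_lt1] dB Hs Ht le_st eqX.
have [sB PsB] := exists_state B dB.
pose Y := sB *m u A; pose Z := sB *m (a *m u A).
have PY : P A B Y := P_comp (P_u A) PsB.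
have PZ : P A B Z := P_comp (P_comp (P_u A) Pa) PsB.
have ZE : Z = c *: Y by rewrite /Z aE mul_scalar_mx scalemxAr.
have xiZE : xi M Z = c *: xi M Y.
  rewrite /Z /Y (xiM (P_comp (P_u A) Pa) PsB) (xiM (P_u A) Pa) (xiM (P_u A) PsB).
  by rewrite (xi_scalar_mx Pa aE) mul_scalar_mx scalemxAr.
(* As [Z = c Y], adding [beta Z] to [s] and [(beta c) Y] to [t] keeps the two sides
   equal and raises the weight of [s] by [beta (1 - c)] more than that of [t]. *)
pose beta := (\sum_(x <- t) x.1 - \sum_(x <- s) x.1) / (1 - c).
have beta_ge0 : 0 <= beta by rewrite divr_ge0 ?subr_ge0 // ltW.
apply: (@addrI _ ((beta * c) *: xi M Y)).
rewrite [in LHS](_ : (beta * c) *: xi M Y = beta *: xi M Z); last by rewrite xiZE scalerA.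
have := xi_conic_balanced A B ((beta, Z) :: s) ((beta * c, Y) :: t); rewrite !big_cons; apply.
- by move=> x; rewrite inE => /predU1P[->|/Hs].
- by move=> x; rewrite inE => /predU1P[->|/Ht] //; rewrite mulr_ge0.
- by rewrite /= /beta; field; rewrite subr_eq0 gt_eqF.
- by rewrite /= ZE scalerA eqX.
Qed.

Lemma xi_conic A B (s t : seq (R * pmat R A B)) :
    {in s, forall x, 0 <= x.1 /\ P A B x.2} -> {in t, forall x, 0 <= x.1 /\ P A B x.2} ->
    \sum_(x <- s) x.1 *: x.2 = \sum_(x <- t) x.1 *: x.2 ->
  \sum_(x <- s) x.1 *: xi M x.2 = \sum_(x <- t) x.1 *: xi M x.2.
Proof.
have [dA|dA] := posnP (sdim A); first by move=> *; apply: dim0_mx_eq; right; exact: lam_eq0.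
have [dB|dB] := posnP (sdim B); first by move=> *; apply: dim0_mx_eq; left; exact: lam_eq0.
move=> Hs Ht eqX.
have [[a [Pa a_neq1]] | triv1] := classic (exists a, P (triv S) (triv S) a /\ a != 1%:M).
  have [c aE] := dim1_scalar_mx (sdim_triv S) a.
  have := scalar_range Pa triv0 triv0; rewrite aE mxE eqxx mulr1n => /andP[c_ge0 c_le1].
  have c_range : 0 <= c < 1.
    by rewrite c_ge0 lt_neqAle c_le1 andbT; apply: contraNneq a_neq1 => c1; rewrite aE c1.
  have [le_st|/ltW le_ts] := leP (\sum_(x <- s) x.1) (\sum_(x <- t) x.1).
    exact: xi_conic_rebalanced aE c_range dB Hs Ht le_st eqX.
  by symmetry; exact: xi_conic_rebalanced aE c_range dB Ht Hs le_ts (esym eqX).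
apply: xi_conic_balanced => //; apply: coef_sum_eq_of_trivial_scalars eqX => //.
- by move=> a Pa; apply/eqP; apply: contraT => a_neq1; elim: triv1; exists a.
- by move=> x /Hs[].
- by move=> x /Ht[].
Qed.

Lemma xi_linear A B (s t : seq (R * pmat R A B)) :
    {in s, forall x, P A B x.2} -> {in t, forall x, P A B x.2} ->
    \sum_(x <- s) x.1 *: x.2 = \sum_(x <- t) x.1 *: x.2 ->
  \sum_(x <- s) x.1 *: xi M x.2 = \sum_(x <- t) x.1 *: xi M x.2.
Proof.
move=> Hs Ht; rewrite (sum_pos_neg_cat (fun X => X)) (sum_pos_neg_cat (@xi _ _ M A B)).
by move=> eqX; apply: xi_conic eqX; apply: pos_neg_cat_ge0.
Qed.

Definition prep_meas {A} (r : seq (R * (pmat R (triv S) A * pmat R A (triv S)))) : Prop :=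
  {in r, forall x, P _ _ x.2.1 /\ P _ _ x.2.2}.

Definition pm_sum {A} (r : seq (R * (pmat R (triv S) A * pmat R A (triv S)))) :
    'M[R]_(sdim A) :=
  \sum_(x <- r) x.1 *: (x.2.1 *m x.2.2).

Definition pm_span {A} (X : 'M[R]_(sdim A)) : Prop := exists2 r, prep_meas r & X = pm_sum r.

Lemma pm_span0 A : pm_span (0 : 'M_(sdim A)).
Proof. by exists [::]; rewrite /pm_sum ?big_nil. Qed.

Lemma pm_spanD A (X Y : 'M_(sdim A)) : pm_span X -> pm_span Y -> pm_span (X + Y).
Proof.
move=> [r1 Hr1 ->] [r2 Hr2 ->]; exists (r1 ++ r2); last by rewrite /pm_sum big_cat.
by move=> x; rewrite mem_cat => /orP[/Hr1|/Hr2].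
Qed.

Lemma pm_spanZ A a (X : 'M_(sdim A)) : pm_span X -> pm_span (a *: X).
Proof.
move=> [r Hr ->]; exists [seq (a * x.1, x.2) | x <- r]; first by move=> _ /mapP[x /Hr Px ->].
by rewrite /pm_sum big_map scaler_sumr; apply: eq_bigr => x _; rewrite scalerA.
Qed.

Lemma pm_span_sum A (I : finType) (F : I -> 'M_(sdim A)) :
  (forall i, pm_span (F i)) -> pm_span (\sum_i F i).
Proof. by move=> HF; apply: big_ind => //; [exact: pm_span0 | exact: pm_spanD]. Qed.

Lemma pm_span_state_effect A (s : pmat R (triv S) A) (e : pmat R A (triv S)) :
  P _ _ s -> P _ _ e -> pm_span (s *m e).
Proof.
move=> Ps Pe; exists [:: (1, (s, e))]; last by rewrite /pm_sum big_seq1 scale1r.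
by move=> x; rewrite inE => /eqP->.
Qed.

Lemma pm_span_rank1 A (v : 'cV[R]_(sdim A)) (w : 'rV[R]_(sdim A)) : pm_span (v *m w).
Proof.
have [k [c [s [Ps ->]]]] := states_span A v.
have [k' [c' [e [Pe ->]]]] := effects_span A w.
rewrite /lincomb mulmx_suml; apply: pm_span_sum => i; rewrite -scalemxAl; apply: pm_spanZ.
rewrite mulmx_sumr; apply: pm_span_sum => j; rewrite -scalemxAr; apply: pm_spanZ.
by rewrite mulmx_castmx_inner; apply: pm_span_state_effect.
Qed.

Lemma pm_span1 A : pm_span (1%:M : 'M_(sdim A)).
Proof.
rewrite [1%:M]matrix_sum_delta; apply: pm_span_sum => i; apply: pm_span_sum => j.
by apply: pm_spanZ; rewrite -(mul_delta_mx (0 : 'I_1)); exact: pm_span_rank1.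
Qed.

Lemma xi_pm_sum {A r} : prep_meas r -> pm_sum r = 1%:M ->
  \sum_(x <- r) x.1 *: (xi M x.2.1 *m xi M x.2.2) = 1%:M :> 'M_(lam M A).
Proof.
move=> Hr r1.
transitivity (\sum_(x <- [seq (x.1, x.2.1 *m x.2.2) | x <- r]) x.1 *: xi M x.2).
  by rewrite big_map big_seq [RHS]big_seq; apply: eq_bigr => x /Hr[Px1 Px2]; rewrite xiM.
rewrite (xi_linear A A _ [:: (1, 1%:M)]) ?big_seq1 /= ?scale1r ?xi1 //.
- by move=> _ /mapP[x /Hr[Px1 Px2] ->]; exact: P_comp.
- by move=> x; rewrite inE => /eqP->.
- by rewrite big_map -r1.
Qed.

(* Forced by [chi s = xi s] on states, given [1 = \sum_(x <- r) x.1 *: (x.2.1 *m x.2.2)]. *)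
Definition chi {A} (r : seq (R * (pmat R (triv S) A * pmat R A (triv S)))) :
    'M[R]_(lam M A, sdim A) :=
  \sum_(x <- r) x.1 *: (xi M x.2.1 *m ont_in *m x.2.2).

Definition chiV {A} (r : seq (R * (pmat R (triv S) A * pmat R A (triv S)))) :
    'M[R]_(sdim A, lam M A) :=
  \sum_(x <- r) x.1 *: (x.2.1 *m ont_out *m xi M x.2.2).

Section Decomposition.
Context {A : S} {r : seq (R * (pmat R (triv S) A * pmat R A (triv S)))}.
Hypotheses (r_pm : prep_meas r) (r1 : pm_sum r = 1%:M).

Lemma chi_state {s : pmat R (triv S) A} : P _ _ s -> chi r *m s *m ont_out = xi M s.
Proof.
move=> Ps; rewrite -[RHS]mul1mx -(xi_pm_sum r_pm r1) /chi !mulmx_suml !big_seq.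
apply: eq_bigr => x /r_pm[Px1 Px2]; rewrite -!scalemxAl; congr (_ *: _).
by rewrite -[RHS]mulmxA -(xiM Ps Px2) (xi_triv (P_comp Ps Px2)) !mulmxA.
Qed.

Lemma effect_chi {e : pmat R A (triv S)} : P _ _ e -> xi M e *m chi r = ont_in *m e.
Proof.
move=> Pe; rewrite -[RHS]mulmx1 -r1 /chi /pm_sum !mulmx_sumr !big_seq.
apply: eq_bigr => x /r_pm[Px1 Px2]; rewrite -!scalemxAr; congr (_ *: _).
rewrite !mulmxA -(xiM Px1 Pe) (xi_triv (P_comp Px1 Pe)).
by rewrite -(mulmxA _ ont_out ont_in) ont_out_in mulmx1 !mulmxA.
Qed.

Lemma chi_mulV : chi r *m chiV r = 1%:M.
Proof.
rewrite -(xi_pm_sum r_pm r1) /chiV mulmx_sumr !big_seq.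
apply: eq_bigr => x /r_pm[Px1 _].
by rewrite -scalemxAr !mulmxA (chi_state Px1).
Qed.

Lemma chiV_mul : chiV r *m chi r = 1%:M.
Proof.
rewrite -r1 /chiV /pm_sum mulmx_suml !big_seq.
apply: eq_bigr => x /r_pm[_ Px2].
by rewrite -scalemxAl -!mulmxA (effect_chi Px2) (mulmxA ont_out) ont_out_in mul1mx.
Qed.

Lemma unit_chi :
  (const_mx 1 : 'M[R]_(1, lam M A)) *m chi r = castmx (sdim_triv S, erefl) (u A).
Proof.
have := effect_chi (P_u A); rewrite xi_u castmx_mull /ont_in castmx_mull mul1mx.
move/(congr1 (castmx (lam_triv M, erefl))); rewrite !castmx_comp castmx_id => ->.
exact: eq_castmx.
Qed.

End Decomposition.

Section Similarity.
Context {A B : S} {rA : seq (R * (pmat R (triv S) A * pmat R A (triv S)))}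
  {rB : seq (R * (pmat R (triv S) B * pmat R B (triv S)))}.
Hypotheses (rA_pm : prep_meas rA) (rA1 : pm_sum rA = 1%:M).
Hypotheses (rB_pm : prep_meas rB) (rB1 : pm_sum rB = 1%:M).

Lemma xi_similar {T : pmat R A B} : P A B T -> xi M T = chi rB *m T *m chiV rA.
Proof.
move=> PT; suff <- : xi M T *m chi rA = chi rB *m T.
  by rewrite -mulmxA (chi_mulV rA_pm rA1) mulmx1.
rewrite -[RHS]mulmx1 -rA1 {1}/chi /pm_sum !mulmx_sumr !big_seq.
apply: eq_bigr => x /rA_pm[Px1 _]; rewrite -!scalemxAr; congr (_ *: _).
rewrite !mulmxA -(xiM Px1 PT) -(chi_state rB_pm rB1 (P_comp Px1 PT)).
by rewrite -(mulmxA _ ont_out ont_in) ont_out_in mulmx1 !mulmxA.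
Qed.

Lemma chi_cone (X : pmat R A B) :
  cone (P A B) X -> cone (@substoch R (lam M B) (lam M A)) (chi rB *m X *m chiV rA).
Proof.
move=> [k [c [Y [c_ge0 [PY ->]]]]].
exists k, c, (fun i => xi M (Y i)); split=> //; split=> [i|]; first exact: xi_substoch.
rewrite /lincomb [chi rB *m _]mulmx_sumr mulmx_suml; apply: eq_bigr => i _.
by rewrite -scalemxAr -scalemxAl (xi_similar (PY i)).
Qed.

End Similarity.

End OntologicalModel.

Theorem proposition3 (R : realType) (S : sysdata)
    (P : forall A B : S, pmat R A B -> Prop)
    (u : forall A : S, pmat R A (triv S))
    (HG : is_TL_GPT P u)
    (M : ontdata R S) (HM : is_ontological_model P u M) :
  exists (chi : forall A : S, 'M[R]_(lam M A, sdim A))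
         (chiinv : forall A : S, 'M[R]_(sdim A, lam M A)),
    (* chi_A is invertible, with inverse chiinv_A *)
    (forall A : S, chi A *m chiinv A = 1%:M /\ chiinv A *m chi A = 1%:M) /\
    (* (i) *)
    (forall (A B : S) (T : pmat R A B), P A B T ->
        xi M T = chi B *m T *m chiinv A) /\
    (* (ii) *)
    (forall A : S,
        (const_mx 1 : 'M[R]_(1, lam M A)) *m chi A
        = castmx (sdim_triv S, erefl) (u A)) /\
    (* (iii) *)
    (forall (A B : S) (X : pmat R A B),
        cone (P A B) X ->
        cone (@substoch R (lam M B) (lam M A)) (chi B *m X *m chiinv A)).
Proof.
case: HG => P_id [P_comp [_ [states_span [effects_span [scalar_range [P_convex [P_u _]]]]]]].
case: HM => xi_substoch [xi1 [xiM [_ [xi_u [xi_scalar [xi_convex_comb xi_coarse_grain]]]]]].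
have decomp (A : S) : {r | prep_meas P r /\ pm_sum r = 1%:M :> 'M_(sdim A)}.
  apply: constructive_indefinite_description.
  have [r r_pm r1] : pm_span P (1%:M : 'M_(sdim A)) by apply: pm_span1.
  by exists r.
pose r A := sval (decomp A).
have r_dec A : prep_meas P (r A) /\ pm_sum (r A) = 1%:M := svalP (decomp A).
exists (fun A => chi M (r A)), (fun A => chiV M (r A)).
split.
  by move=> A /=; have [? ?] := r_dec A; split; [exact: (chi_mulV P u) | exact: (chiV_mul P)].
split.
  by move=> A B T PT /=; have [? ?] := r_dec A; have [? ?] := r_dec B; exact: (xi_similar P u).
split; first by move=> A /=; have [? ?] := r_dec A; exact: (unit_chi P u).
by move=> A B X /=; have [? ?] := r_dec A; have [? ?] := r_dec B; exact: (chi_cone P u).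
Qed.
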